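(* Let $\eta\in(0,\frac12]$. For each cluster $V_i$, $i\in[k]$, let $B_i\subseteq V$ be an $(\eta,V_i)$-biased set of size at least $\frac{16\log n}{\eta^2\delta^2}$ (fixed independently of the oracle's answers on pairs involving it). Then with probability at least $1-n^{-6}$, the following holds for all $v\in V$ and all $i\in[k]$ simultaneously: (1) if $v\in V_i$, then $\mathsf{ClusterVerify}(v,B_i)$ returns TRUE; (2) if $v\notin V_i$, then $\mathsf{ClusterVerify}(v,B_i)$ returns FALSE.
   Context: Clustering with a faulty oracle: a set $V$ of $n$ vertices is partitioned into $k$ unknown clusters $V_1,\dots,V_k$; $\tau(u,v)=1$ if $u,v$ are in the same cluster, $-1$ otherwise. A query of pair $(u,v)$ returns $\tilde\tau(u,v)=\sigma_{u,v}\tau(u,v)$ with independent $\sigma_{u,v}\in\{\pm1\}$, $\Pr[\sigma_{u,v}=+1]=\frac12+\frac\delta2$, $\delta\in(0,1)$; repeated queries return the same answer. For $\eta\in[0,\frac12]$ and a cluster $C=V_i$, a set $B\subseteq V$ is $(\eta,C)$-biased if $|B\cap C|\ge(\frac12+\eta)|B|$. $\mathsf{ClusterVerify}(v,B)$: query $(v,u)$ for every $u\in B$, let $d(v,B)=\#\{u\in B:\tilde\tau(v,u)=1\}$, and output TRUE if $d(v,B)\ge\frac12|B|$, FALSE otherwise. *)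

From HB Require Import structures.
From mathcomp Require Import all_boot all_order all_algebra.
From mathcomp Require Import reals exp.
Set Implicit Arguments. Unset Strict Implicit. Unset Printing Implicit Defensive.
Import Order.TTheory GRing.Theory Num.Theory.
Local Open Scope ring_scope.

(* A noise outcome is s : {ffun 'I_n * 'I_n -> bool};
   s x = true means sigma = +1.  The unordered pair {u,v} uses the coordinate
   pkey u v = (min,max); the remaining coordinates are irrelevant dummies, and
   since all coordinates are i.i.d. the induced law on the relevant ones is the
   product law of the independent sigma_{u,v}. *)

Definition tau n k (c : 'I_n -> 'I_k) (u v : 'I_n) : bool := c u == c v.

Definition pkey n (u v : 'I_n) : 'I_n * 'I_n :=
  if (u <= v)%N then (u, v) else (v, u).

(* oracle answer: true iff tilde-tau(v,u) = +1, i.e. sigma_{v,u} * tau(v,u) = 1 *)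
Definition answer n k (c : 'I_n -> 'I_k) (s : {ffun 'I_n * 'I_n -> bool})
  (v u : 'I_n) : bool := s (pkey v u) == tau c v u.

Definition dvB n k (c : 'I_n -> 'I_k) s (v : 'I_n) (B : {set 'I_n}) : nat :=
  #|[set u in B | answer c s v u]|.

Definition ClusterVerify n k (c : 'I_n -> 'I_k) s (v : 'I_n) (B : {set 'I_n}) : bool :=
  (#|B| <= 2 * dvB c s v B)%N.

Definition cluster n k (c : 'I_n -> 'I_k) (i : 'I_k) : {set 'I_n} := [set v | c v == i].

Definition biased (R : realFieldType) n k (c : 'I_n -> 'I_k) (eta : R) (i : 'I_k)
  (B : {set 'I_n}) : Prop :=
  (1/2 + eta) * #|B|%:R <= #|B :&: cluster c i|%:R.

Definition wt (R : realFieldType) (delta : R) (b : bool) : R :=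
  if b then 1/2 + delta/2 else 1/2 - delta/2.

Definition Pr (R : realFieldType) n (delta : R)
  (E : pred {ffun 'I_n * 'I_n -> bool}) : R :=
  \sum_(s | E s) \prod_(x : 'I_n * 'I_n) wt delta (s x).

From HB Require Import structures.
From mathcomp Require Import all_boot all_order all_algebra.
From mathcomp Require Import reals exp sequences.
From mathcomp Require Import ring lra zify.
Import Order.TTheory GRing.Theory Num.Theory.
Local Open Scope ring_scope.
Set Implicit Arguments. Unset Strict Implicit.

(* ClusterVerify(v, B_i) errs only if at least half of
   the answers on the pairs {v, u}, u in B_i, are misleading: "no" answers if v is in V_i,
   "yes" answers otherwise.  Such an answer has probability (1 - delta)/2 when u is in V_i
   and at most (1 + delta)/2 otherwise, so by the bias of B_i the expected number of
   misleading answers is at most (1/2 - delta eta)|B_i|, and these answers are independent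
   because the pairs {v, u} are distinct.  A Chernoff bound makes the error probability at
   most exp(-(2/3)|B_i| delta^2 eta^2) <= n^-8, and a union bound over the nk <= n^2 pairs
   (v, i) concludes. *)

Section ProductMeasure.

Variables (R : realFieldType) (n : nat) (delta : R).
Local Notation outcome := {ffun 'I_n * 'I_n -> bool}.

Definition mass (s : outcome) : R := \prod_x wt delta (s x).

Lemma sum_wt : \sum_(b : bool) wt delta b = 1.
Proof. by rewrite big_bool /wt /=; field. Qed.

Lemma sum_mass_prod (I : finType) (g : I -> 'I_n * 'I_n) (P : pred I)
    (F : I -> bool -> R) : injective g ->
  \sum_(s : outcome) mass s * \prod_(u | P u) F u (s (g u))
    = \prod_(u | P u) \sum_(b : bool) wt delta b * F u b.
Proof.
move=> g_inj.
pose K x b := \prod_(u | P u && (g u == x)) F u b.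
transitivity (\sum_(s : outcome) \prod_x (wt delta (s x) * K x (s x))).
  apply: eq_bigr => s _; rewrite big_split /=; congr (_ * _).
  rewrite (partition_big g xpredT) //.
  by apply: eq_bigr => x _; apply: eq_bigr => u /andP[_ /eqP ->].
rewrite -(bigA_distr_bigA (fun x b => wt delta b * K x b)) /=.
rewrite [RHS](partition_big g xpredT) //; apply: eq_bigr => x _.
case: (pickP [pred u | P u && (g u == x)]) => [u0 /andP[Pu0 /eqP gu0] | none].
  have gx_u0 : [pred u | P u && (g u == x)] =1 pred1 u0.
    move=> u /=; apply/andP/eqP => [[_ /eqP] | ->]; last by rewrite Pu0 gu0.
    by rewrite -gu0 => /g_inj.
  by rewrite (big_pred1 u0 gx_u0); apply: eq_bigr => b _; rewrite /K (big_pred1 u0 gx_u0).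
rewrite [RHS]big_pred0 //; under eq_bigr do rewrite /K big_pred0 // mulr1.
exact: sum_wt.
Qed.

Lemma sum_mass : \sum_(s : outcome) mass s = 1.
Proof.
have := @sum_mass_prod _ id xpred0 (fun _ _ => 1) (@inj_id _).
rewrite [RHS]big_pred0 // => <-; by apply: eq_bigr => s _; rewrite big_pred0 // mulr1.
Qed.

Lemma Pr_add_predC (E : pred outcome) : Pr delta E + Pr delta (predC E) = 1.
Proof. by rewrite -sum_mass [RHS](bigID E). Qed.

Lemma sum_wt_if (A : pred bool) (a : R) :
  \sum_(b : bool) wt delta b * (if A b then a else 1)
    = 1 + (a - 1) * \sum_(b | A b) wt delta b.
Proof.
by rewrite [in RHS]big_mkcond !big_bool /wt /=; case: (A true); case: (A false); field.
Qed.

Hypotheses (delta_geN1 : -1 <= delta) (delta_le1 : delta <= 1).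

Lemma wt_ge0 b : 0 <= wt delta b.
Proof. by move: delta_geN1 delta_le1; case: b; rewrite /wt /= => ? ?; lra. Qed.

Lemma mass_ge0 s : 0 <= mass s.
Proof. by apply: prodr_ge0 => x _; apply: wt_ge0. Qed.

Lemma le_Pr (E1 E2 : pred outcome) : subpred E1 E2 -> Pr delta E1 <= Pr delta E2.
Proof.
move=> sE12; rewrite /Pr [leLHS]big_mkcond [leRHS]big_mkcond /=.
apply: ler_sum => s _; case: ifP => [/sE12 -> // | _].
by case: ifP => _; rewrite ?mass_ge0.
Qed.

Lemma Pr_union_le (I : finType) (E : pred outcome) (F : I -> pred outcome) :
  (forall s, E s -> exists i, F i s) -> Pr delta E <= \sum_i Pr delta (F i).
Proof.
move=> cover; rewrite /Pr; under [leRHS]eq_bigr do rewrite big_mkcond.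
rewrite exchange_big [leLHS]big_mkcond /=; apply: ler_sum => s _.
have F_ge0 i : 0 <= (if F i s then mass s else 0) by case: ifP; rewrite ?mass_ge0.
case: ifP => [/cover[i Fis] | _]; last exact: sumr_ge0.
by rewrite (bigD1 i) //= Fis lerDl; apply: sumr_ge0.
Qed.

Lemma Pr_le_expect (E : pred outcome) (X : outcome -> R) :
  (forall s, 0 <= X s) -> (forall s, E s -> 1 <= X s) ->
  Pr delta E <= \sum_s mass s * X s.
Proof.
move=> X_ge0 X_ge1; rewrite [leRHS](bigID E) /= -[leLHS]addr0.
apply: lerD; last by apply: sumr_ge0 => s _; rewrite mulr_ge0 ?mass_ge0.
by apply: ler_sum => s Es; rewrite ler_peMr ?mass_ge0 ?X_ge1.
Qed.

Section Majority.

Variables (I : finType) (g : I -> 'I_n * 'I_n) (B : {set I}) (f : I -> bool -> bool).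
Hypothesis g_inj : injective g.

Definition majority (s : outcome) : bool :=
  (#|B| <= 2 * #|[set u in B | f u (s (g u))]|)%N.

Lemma Pr_majority_le_mgf (phi : R) : 1 <= phi ->
  Pr delta majority
    <= (\prod_(u in B) (1 + (phi ^+ 2 - 1) * \sum_(b | f u b) wt delta b)) / phi ^+ #|B|.
Proof.
move=> phi_ge1; have phi_gt0 : 0 < phi := lt_le_trans ltr01 phi_ge1.
pose G u b := if f u b then phi ^+ 2 else 1.
pose X (s : outcome) := (\prod_(u in B) G u (s (g u))) / phi ^+ #|B|.
have X_ge0 s : 0 <= X s.
  apply: divr_ge0; last exact/exprn_ge0/ltW.
  by apply: prodr_ge0 => u _; rewrite /G; case: ifP => _; rewrite ?exprn_ge0 ?ltW.
have X_ge1 s : majority s -> 1 <= X s.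
  move=> maj; rewrite /X ler_pdivlMr ?exprn_gt0 // mul1r.
  have -> : \prod_(u in B) G u (s (g u)) = phi ^+ (2 * #|[set u in B | f u (s (g u))]|).
    rewrite exprM -prodr_const -big_mkcondr /=.
    by apply: eq_bigl => u; rewrite inE.
  exact: ler_weXn2l.
apply: le_trans (Pr_le_expect X_ge0 X_ge1) _.
rewrite /X (eq_bigr (fun s => mass s * \prod_(u in B) G u (s (g u)) / phi ^+ #|B|)).
  by rewrite -mulr_suml sum_mass_prod //; under eq_bigr do rewrite sum_wt_if.
by move=> s _; rewrite mulrA.
Qed.

End Majority.

End ProductMeasure.

Lemma invr_1Dx_le_expR (R : realType) (y : R) : 0 <= y -> (1 + y)^-1 <= expR (y ^+ 2 - y).
Proof.
move=> y_ge0; apply: le_trans (expR_ge1Dx _).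
rewrite -div1r ler_pdivrMr; last by rewrite ltr_pwDl.
have -> : (1 + (y ^+ 2 - y)) * (1 + y) = 1 + y ^+ 3 by ring.
by rewrite lerDl exprn_ge0.
Qed.

Section Chernoff.

Variables (R : realType) (n : nat) (delta : R).
Hypotheses (delta_geN1 : -1 <= delta) (delta_le1 : delta <= 1).
Variables (I : finType) (g : I -> 'I_n * 'I_n) (B : {set I}) (f : I -> bool -> bool).
Hypothesis g_inj : injective g.

(* The base [1 + y], [y = 2 eps / 3], minimizes the quadratic part [3/2 y^2 - 2 eps y]
   of the exponent obtained below. *)
Lemma Pr_majority_le (eps : R) : 0 <= eps ->
  \sum_(u in B) \sum_(b | f u b) wt delta b <= (1/2 - eps) * #|B|%:R ->
  Pr delta (majority g B f) <= expR (- (2/3 * #|B|%:R * eps ^+ 2)).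
Proof.
move=> eps_ge0 mean_le.
set m := #|B|%:R; set y := 2 * eps / 3; set a := (1 + y) ^+ 2 - 1.
have y_ge0 : 0 <= y by rewrite /y; lra.
have a_ge0 : 0 <= a by rewrite /a; nra.
have p_ge0 u : 0 <= \sum_(b | f u b) wt delta b by apply: sumr_ge0 => b _; apply: wt_ge0.
apply: le_trans (Pr_majority_le_mgf delta_geN1 delta_le1 B f g_inj (_ : 1 <= 1 + y)) _.
  by rewrite lerDl.
have prod_le : \prod_(u in B) (1 + a * \sum_(b | f u b) wt delta b)
    <= expR (a * ((1/2 - eps) * m)).
  apply: le_trans (_ : _ <= expR (a * \sum_(u in B) \sum_(b | f u b) wt delta b)) _.
    rewrite mulr_sumr expR_sum; apply: ler_prod => u _.
    by rewrite expR_ge1Dx addr_ge0 ?mulr_ge0.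
  by rewrite ler_expR ler_wpM2l.
have inv_le : (1 + y)^-1 ^+ #|B| <= expR (m * (y ^+ 2 - y)).
  rewrite expRM_natl; apply: lerXn2r; rewrite ?nnegrE ?expR_ge0 ?invr_ge0 //.
    by rewrite addr_ge0.
  exact: invr_1Dx_le_expR.
rewrite -exprVn; apply: le_trans (ler_pM _ _ prod_le inv_le) _.
- by apply: prodr_ge0 => u _; rewrite addr_ge0 ?mulr_ge0.
- by rewrite exprn_ge0 // invr_ge0 addr_ge0.
rewrite -expRD ler_expR.
have -> : a * ((1/2 - eps) * m) + m * (y ^+ 2 - y) = - (2/3 * m * eps ^+ 2) - m * eps * y ^+ 2.
  by rewrite /a /y; field.
by rewrite gerBl mulr_ge0 ?sqr_ge0 ?mulr_ge0.
Qed.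

End Chernoff.

Lemma pkey_inj n (v : 'I_n) : injective (pkey v).
Proof. by move=> u u'; rewrite /pkey; do 2 case: ifP => _; case=> *; subst. Qed.

Lemma ClusterVerify_false n k (c : 'I_n -> 'I_k) s v B :
  ~~ ClusterVerify c s v B -> (#|B| <= 2 * #|[set u in B | ~~ answer c s v u]|)%N.
Proof.
have : #|[set u in B | answer c s v u]| + #|[set u in B | ~~ answer c s v u]| = #|B|.
  rewrite -(cardsID [set u | answer c s v u] B).
  by congr (_ + _); apply: eq_card => u; rewrite !inE andbC.
rewrite /ClusterVerify /dvB; lia.
Qed.

Lemma sum_le_biased (R : realFieldType) (I : finType) (B C : {set I}) (delta eta : R)
    (p : I -> R) :
  0 <= delta -> (1/2 + eta) * #|B|%:R <= #|B :&: C|%:R ->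
  (forall u, u \in B -> p u <= wt delta (u \notin C)) ->
  \sum_(u in B) p u <= (1/2 - delta * eta) * #|B|%:R.
Proof.
move=> delta_ge0 biasBC p_le.
have cardBC : #|B :&: C|%:R = \sum_(u in B) (u \in C)%:R :> R.
  rewrite -sum1_card (eq_bigl (fun u => (u \in B) && (u \in C))) => [|u]; last by rewrite inE.
  by rewrite big_mkcondr natr_sum; apply: eq_bigr => u _; case: (u \in C).
apply: le_trans (_ : _ <= \sum_(u in B) ((1 + delta) / 2 - delta * (u \in C)%:R)) _.
  by apply: ler_sum => u /p_le; case: (u \in C); rewrite /wt /= => ?; lra.
rewrite sumrB sumr_const -mulr_sumr -cardBC -mulr_natl.
nra.
Qed.

Lemma wt_le_wt_true (R : realFieldType) (delta : R) b : 0 <= delta -> wt delta b <= wt delta true.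
Proof. by case: b; rewrite /wt //= => ?; lra. Qed.

Section ClusterVerifyError.

Variables (R : realType) (n k : nat) (c : 'I_n -> 'I_k) (delta eta : R).
Hypotheses (delta_ge0 : 0 <= delta) (delta_le1 : delta <= 1) (eta_ge0 : 0 <= eta).
Variables (v : 'I_n) (i : 'I_k) (B : {set 'I_n}).
Hypothesis B_biased : biased c eta i B.

Lemma Pr_ClusterVerify_err :
  Pr delta (fun s => ~~ (((c v == i) ==> ClusterVerify c s v B)
                         && ((c v != i) ==> ~~ ClusterVerify c s v B)))
    <= expR (- (2/3 * #|B|%:R * (delta * eta) ^+ 2)).
Proof.
have delta_geN1 : -1 <= delta := le_trans (lerN10 _) delta_ge0.
have deta_ge0 : 0 <= delta * eta := mulr_ge0 delta_ge0 eta_ge0.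
have [cv_i | cv_i] := eqVneq (c v) i.
- apply: le_trans (le_Pr delta_geN1 delta_le1
    (E2 := majority (pkey v) B (fun u b => b != tau c v u)) _) _.
    by move=> s /=; rewrite andbT => /ClusterVerify_false.
  apply: (Pr_majority_le delta_geN1 delta_le1 (@pkey_inj _ v) deta_ge0).
  apply: (sum_le_biased delta_ge0 B_biased) => u _.
  rewrite big_mkcond big_bool /tau inE -cv_i [c u == _]eq_sym.
  by case: (c v == c u); rewrite /= ?add0r ?addr0.
- apply: le_trans (le_Pr delta_geN1 delta_le1
    (E2 := majority (pkey v) B (fun u b => b == tau c v u)) _) _.
    by move=> s /=; rewrite negbK.
  apply: (Pr_majority_le delta_geN1 delta_le1 (@pkey_inj _ v) deta_ge0).
  apply: (sum_le_biased delta_ge0 B_biased) => u _.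
  rewrite big_pred1_eq /tau inE; have [-> | _] := eqVneq (c u) i.
    by rewrite (negPf cv_i).
  exact: wt_le_wt_true.
Qed.

End ClusterVerifyError.

Lemma expR_le_invX (R : realType) (x t : R) (p : nat) :
  0 < x -> p%:R * ln x <= t -> expR (- t) <= (x ^+ p)^-1.
Proof.
move=> x_gt0 le_t.
by rewrite -[x in (x ^+ p)^-1](lnK x_gt0) -expRM_natl -expRN ler_expR lerN2.
Qed.

Lemma leq_card_surj (T T' : finType) (f : T -> T') :
  (forall y, exists x, f x = y) -> (#|T'| <= #|T|)%N.
Proof.
move=> f_surj; apply: leq_trans (leq_image_card f T).
by apply/subset_leq_card/subsetP => y _; have [x <-] := f_surj y; exact: image_f.
Qed.

Lemma mulrn_invX_le (R : numFieldType) (n k p : nat) : (k <= n)%N ->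
  (n%:R ^+ p.+2)^-1 *+ (n * k) <= (n%:R ^+ p)^-1 :> R.
Proof.
move=> k_le_n; apply: le_trans (ler_wpMn2l _ (leq_mul (leqnn n) k_le_n)) _.
  by rewrite invr_ge0 exprn_ge0.
have [-> | n_gt0] := posnP n; first by rewrite mulr0n invr_ge0 exprn_ge0.
rewrite mulnn -[_ *+ (n ^ 2)]mulr_natr natrX [leLHS](_ : _ = (n%:R ^+ p)^-1) //.
by rewrite -addn2 exprD invfM -mulrA mulVf ?mulr1 // expf_neq0 // pnatr_eq0 -lt0n.
Qed.

Theorem lemma3p4 (R : realType) (n k : nat) (c : 'I_n -> 'I_k)
  (c_surj : forall i : 'I_k, exists v : 'I_n, c v = i)
  (delta eta : R) (hd0 : 0 < delta) (hd1 : delta < 1)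
  (he0 : 0 < eta) (he1 : eta <= 1/2)
  (B : 'I_k -> {set 'I_n})
  (hB : forall i, biased c eta i (B i))
  (hsize : forall i, 16 * ln (n%:R) / (eta ^+ 2 * delta ^+ 2) <= #|B i|%:R) :
  1 - (n%:R ^+ 6)^-1 <=
  Pr delta (fun s => [forall v : 'I_n, forall i : 'I_k,
      ((c v == i) ==> ClusterVerify c s v (B i)) &&
      ((c v != i) ==> ~~ ClusterVerify c s v (B i))]).
Proof.
set good := (fun s => _).
have k_le_n : (k <= n)%N by rewrite -[k]card_ord -[n]card_ord; apply: leq_card_surj c_surj.
pose err (p : 'I_n * 'I_k) s := ~~ (((c p.1 == p.2) ==> ClusterVerify c s p.1 (B p.2))
                                 && ((c p.1 != p.2) ==> ~~ ClusterVerify c s p.1 (B p.2))).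
have err_le p : Pr delta (err p) <= (n%:R ^+ 8)^-1.
  have n_ge1 : 1 <= n%:R :> R by rewrite ler1n (leq_ltn_trans _ (ltn_ord p.1)).
  apply: le_trans (Pr_ClusterVerify_err (ltW hd0) (ltW hd1) (ltW he0) p.1 (hB p.2)) _.
  apply: expR_le_invX; first exact: lt_le_trans ltr01 n_ge1.
  have := hsize p.2; rewrite ler_pdivrMr ?mulr_gt0 ?exprn_gt0 // exprMn [delta ^+ 2 * _]mulrC.
  by have := ln_ge0 n_ge1; lra.
suff bad_le : Pr delta (predC good) <= (n%:R ^+ 6)^-1.
  by have := Pr_add_predC delta good; lra.
have delta_geN1 : -1 <= delta by lra.
apply: le_trans (Pr_union_le delta_geN1 (ltW hd1) (F := err) _) _.
  by move=> s /forallPn[v /forallPn[i err_vi]]; exists (v, i).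
apply: le_trans (ler_sum _ (fun p _ => err_le p)) _.
by rewrite sumr_const card_prod !card_ord mulrn_invX_le.
Qed.
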